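(* Let $\mathcal{H}_o=(V,\vec H,\bm{w})$ be a strongly connected weighted oriented hypergraph with $|V|\ge2$, and let $w_{\max}=\max_{h\in\vec H}w_h$. (i) If $h=(A_h,B_h)\in\vec H$ is such that the limit $\kappa(h)=\lim_{\alpha\to1^-}\kappa_\alpha(h)/(1-\alpha)$ exists in $\mathbb{R}$ and $\kappa(h)>0$, then $L(h)\le\frac{2w_{\max}}{\kappa(h)}$. (ii) If there is a constant $\kappa>0$ such that $\kappa(u,v)\ge\kappa$ for every hyperedge $h\in\vec H$ and all $u\in A_h$, $v\in B_h$, then $$\mathrm{diam}(\mathcal{H}_o)\le\frac{2w_{\max}}{\kappa}.$$
   Context: A weighted oriented hypergraph $(V,\vec H,\bm w)$ has a finite vertex set $V$, a finite set $\vec H$ of hyperedges, each an ordered pair $h=(A_h,B_h)$ of nonempty subsets of $V$ with $A_h\cap B_h=\emptyset$, such that for every $h\in\vec H$ its reversal $h^-=(B_h,A_h)$ also belongs to $\vec H$, and positive weights with $w_h=w_{h^-}$. A directed path from $u$ to $v$ is a sequence of hyperedges $h_1,\dots,h_l$ with $u\in A_{h_1}$, $v\in B_{h_l}$, $B_{h_j}\cap A_{h_{j+1}}\ne\emptyset$; strongly connected means such a path exists for all distinct $u,v$. $d(u,v)=\inf_\gamma\sum_{h\in\gamma}w_h$ over directed paths from $u$ to $v$ ($u\ne v$), $d(u,u)=0$; $\mathrm{diam}(\mathcal{H}_o)=\max_{u,v}d(u,v)$; $L(h)=\min_{x\in A_h,y\in B_h}d(x,y)$. $\Gamma^{in}(v)=\{z:\exists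 h'\text{ with }v\in B_{h'},z\in A_{h'}\}$, $\Gamma^{out}(v)=\{z:\exists h'\text{ with }v\in A_{h'},z\in B_{h'}\}$, and $\Gamma(v)=\Gamma^{out}(v)$. Hyperedge measures, for $A_h=\{x_1,\dots,x_n\}$, $B_h=\{y_1,\dots,y_m\}$, $\alpha\in[0,1]$: $\mu^\alpha_{A_h}=\sum_i\mu^\alpha_{x_i}$ with $\mu^\alpha_{x_i}(x_i)=\alpha/n$, $\mu^\alpha_{x_i}(z)=(1-\alpha)\sum_{h':x_i\in B_{h'},z\in A_{h'}}\frac{1}{n|A_{h'}|}\frac{w_{h'}}{\sum_{h'':x_i\in B_{h''}}w_{h''}}$ for $z\in\Gamma^{in}(x_i)$, $0$ otherwise; $\mu^\alpha_{B_h}=\sum_j\mu^\alpha_{y_j}$ with $\mu^\alpha_{y_j}(y_j)=\alpha/m$, $\mu^\alpha_{y_j}(z)=(1-\alpha)\sum_{h':y_j\in A_{h'},z\in B_{h'}}\frac{1}{m|B_{h'}|}\frac{w_{h'}}{\sum_{h'':y_j\in A_{h''}}w_{h''}}$ for $z\in\Gamma^{out}(y_j)$, $0$ otherwise; $\kappa_\alpha(h)=1-W(\mu^\alpha_{A_h},\mu^\alpha_{B_h})/L(h)$. Vertex measures: $\mu^\alpha_{u^{in}}(u)=\alpha$, $\mu^\alpha_{u^{in}}(z)=(1-\alpha)\sum_{h':u\in B_{h'},z\in A_{h'}}\frac{1}{|A_{h'}|}\frac{w_{h'}}{\sum_{h'':u\in B_{h''}}w_{h''}}$ for $z\in\Gamma(u)$,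 $0$ otherwise; $\mu^\alpha_{v^{out}}(v)=\alpha$, $\mu^\alpha_{v^{out}}(z)=(1-\alpha)\sum_{h':v\in A_{h'},z\in B_{h'}}\frac{1}{|B_{h'}|}\frac{w_{h'}}{\sum_{h'':v\in A_{h''}}w_{h''}}$ for $z\in\Gamma(v)$, $0$ otherwise. $W(\mu,\nu)=\inf_\pi\sum_{x,y}\pi(x,y)d(x,y)$ over couplings $\pi$ of $\mu,\nu$. For distinct $u,v$: $\kappa_\alpha(u,v)=1-W(\mu^\alpha_{u^{in}},\mu^\alpha_{v^{out}})/d(u,v)$ and $\kappa(u,v)=\lim_{\alpha\to1^-}\kappa_\alpha(u,v)/(1-\alpha)$ (this limit exists in $\mathbb{R}$). *)

From HB Require Import structures.
From mathcomp Require Import all_boot all_order all_algebra.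
From mathcomp Require Import all_classical all_reals all_analysis.
Set Implicit Arguments. Unset Strict Implicit. Unset Printing Implicit Defensive.
Import Order.TTheory GRing.Theory Num.Theory.
Local Open Scope classical_set_scope.
Local Open Scope ring_scope.

Section WOH.
Variables (R : realType) (V : finType).

Definition hedge := ({set V} * {set V})%type.

Variables (H : {set hedge}) (w : hedge -> R).

Definition is_woh : Prop :=
  forall h, h \in H ->
    [/\ h.1 != finset.set0, h.2 != finset.set0, h.1 :&: h.2 == finset.set0 &
        [/\ (h.2, h.1) \in H, 0 < w h & w (h.2, h.1) = w h]].

Definition link (h1 h2 : hedge) : bool := h1.2 :&: h2.1 != finset.set0.

Definition is_dpath (u v : V) (p : seq hedge) : bool :=
  if p is h0 :: t then
    [&& all (fun h => h \in H) p, u \in h0.1, v \in (last h0 t).2 & path link h0 t]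
  else false.

Definition strongly_connected : Prop :=
  forall u v : V, u != v -> exists p, is_dpath u v p.

Definition dist (u v : V) : R :=
  if u == v then 0 else
  inf [set x : R | exists p, is_dpath u v p /\ x = \sum_(h <- p) w h].

Definition diam : R := \big[Num.max/0]_(uv : V * V) dist uv.1 uv.2.

Definition wmax : R := \big[Num.max/0]_(h in H) w h.

Definition Lh (h : hedge) : R :=
  inf [set r : R | exists x y, x \in h.1 /\ y \in h.2 /\ r = dist x y].

Definition Gamma_in (v : V) : {set V} :=
  [set z | [exists h in H, (v \in h.2) && (z \in h.1)]].
Definition Gamma_out (v : V) : {set V} :=
  [set z | [exists h in H, (v \in h.1) && (z \in h.2)]].

Definition mu_x (n : nat) (a : R) (x z : V) : R :=
  if z == x then a / n%:R
  else if z \in Gamma_in x then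
    (1 - a) * \sum_(h' in H | (x \in h'.2) && (z \in h'.1))
       (1 / (n%:R * #|h'.1|%:R)) *
       (w h' / \sum_(h'' in H | x \in h''.2) w h'')
  else 0.

Definition mu_y (m : nat) (a : R) (y z : V) : R :=
  if z == y then a / m%:R
  else if z \in Gamma_out y then
    (1 - a) * \sum_(h' in H | (y \in h'.1) && (z \in h'.2))
       (1 / (m%:R * #|h'.2|%:R)) *
       (w h' / \sum_(h'' in H | y \in h''.1) w h'')
  else 0.

Definition mu_A (h : hedge) (a : R) (z : V) : R :=
  \sum_(x in h.1) mu_x #|h.1| a x z.
Definition mu_B (h : hedge) (a : R) (z : V) : R :=
  \sum_(y in h.2) mu_y #|h.2| a y z.

(* vertex measures (Gamma = Gamma_out) *)
Definition mu_in (a : R) (u z : V) : R :=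
  if z == u then a
  else if z \in Gamma_out u then
    (1 - a) * \sum_(h' in H | (u \in h'.2) && (z \in h'.1))
       (1 / #|h'.1|%:R) * (w h' / \sum_(h'' in H | u \in h''.2) w h'')
  else 0.

Definition mu_out (a : R) (v z : V) : R :=
  if z == v then a
  else if z \in Gamma_out v then
    (1 - a) * \sum_(h' in H | (v \in h'.1) && (z \in h'.2))
       (1 / #|h'.2|%:R) * (w h' / \sum_(h'' in H | v \in h''.1) w h'')
  else 0.

Definition is_coupling (mu nu : V -> R) (pi : V -> V -> R) : Prop :=
  [/\ forall x y, 0 <= pi x y,
      forall x, \sum_(y : V) pi x y = mu x &
      forall y, \sum_(x : V) pi x y = nu y].

Definition W1 (mu nu : V -> R) : R :=
  inf [set c : R | exists pi, is_coupling mu nu pi /\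
                   c = \sum_(x : V) \sum_(y : V) pi x y * dist x y].

Definition kappa_h (h : hedge) (a : R) : R :=
  1 - W1 (mu_A h a) (mu_B h a) / Lh h.

Definition kappa_uv (u v : V) (a : R) : R :=
  1 - W1 (mu_in a u) (mu_out a v) / dist u v.

End WOH.

From HB Require Import structures.
From mathcomp Require Import all_boot all_order all_algebra.
From mathcomp Require Import all_classical all_reals all_analysis.
From mathcomp Require Import ring lra.
Set Implicit Arguments. Unset Strict Implicit. Unset Printing Implicit Defensive.
Import Order.TTheory GRing.Theory Num.Theory numFieldNormedType.Exports.
Local Open Scope classical_set_scope.
Local Open Scope ring_scope.

(* Both bounds come from Kantorovich duality: W1(mu, nu) >= E_nu f - E_mu f for
   every 1-Lipschitz f.  The lazy walk from v keeps mass a at v and moves the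
   rest across hyperedges of weight at most wmax, so its mean of f is within
   (1 - a) wmax of f v; the hyperedge measures are uniform averages of such
   walks.  (i) With f = d(A_h, .) this gives W1 >= L(h) - 2 (1 - a) wmax, i.e.
   kappa_a(h) / (1 - a) <= 2 wmax / L(h).  (ii) With phi z the mean of d(u, .)
   under the walk from z, the curvature bound makes phi Lipschitz along every
   hyperedge with constant 1 - kd (1 - a), hence along paths, while
   phi v - phi u >= d(u, v) - 2 (1 - a) wmax; so kd d(u, v) <= 2 wmax for every
   kd below the limits. *)

Lemma sum_mul_center_dev (R : numDomainType) (T : finType) (mu g : T -> R)
    (x : T) (M : R) :
  (forall z, 0 <= mu z) ->
  (forall z, z != x -> mu z != 0 -> `|g z - g x| <= M) ->
  `|\sum_z mu z * g z - (\sum_z mu z) * g x| <= (\sum_z mu z - mu x) * M.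
Proof.
move=> mu_ge0 gM.
have -> : \sum_z mu z * g z - (\sum_z mu z) * g x =
    \sum_(z | z != x) mu z * (g z - g x).
  rewrite mulr_suml -sumrB (bigD1 x) //= subrr add0r.
  by apply: eq_bigr => z _; rewrite mulrBr.
rewrite [\sum_z mu z](bigD1 x) //= addrC addrK mulr_suml.
apply: le_trans (ler_norm_sum _ _ _) _; apply: ler_sum => z zx.
rewrite normrM ger0_norm //.
have [->|mz] := eqVneq (mu z) 0; first by rewrite !mul0r.
exact: ler_wpM2l (gM z zx mz).
Qed.

Lemma sum_div_card_le (R : numFieldType) (I : finType) (A : {set I})
    (F : I -> R) (M : R) :
  A != finset.set0 -> (forall i, i \in A -> F i <= M) ->
  \sum_(i in A) F i / #|A|%:R <= M.
Proof.
move=> A0 FM; have nA : (#|A|%:R : R) != 0 by rewrite pnatr_eq0 -lt0n card_gt0.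
apply: le_trans (_ : \sum_(i in A) M / #|A|%:R <= M).
  by apply: ler_sum => i iA; rewrite ler_pM2r ?FM // invr_gt0 lt0r nA /=.
by rewrite sumr_const -[(_ / _) *+ _]mulr_natr divfK.
Qed.

Lemma le_sum_div_card (R : numFieldType) (I : finType) (A : {set I})
    (F : I -> R) (m : R) :
  A != finset.set0 -> (forall i, i \in A -> m <= F i) ->
  m <= \sum_(i in A) F i / #|A|%:R.
Proof.
move=> A0 mF; rewrite -lerN2 -sumrN.
under eq_bigr do rewrite -mulNr.
by apply: sum_div_card_le => // i iA; rewrite lerN2 mF.
Qed.

Lemma expect_avg (R : fieldType) (T : finType) (A : {set T}) (F : T -> T -> R)
    (g : T -> R) :
  \sum_z (\sum_(x in A) F x z / #|A|%:R) * g z =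
  \sum_(x in A) (\sum_z F x z * g z) / #|A|%:R.
Proof.
under eq_bigr do rewrite mulr_suml.
rewrite exchange_big; apply: eq_bigr => x _; rewrite mulr_suml.
by apply: eq_bigr => z _; rewrite mulrAC.
Qed.

Lemma avg_mass (R : numFieldType) (I T : finType) (A : {set I}) (F : I -> T -> R) :
  A != finset.set0 -> (forall i, i \in A -> \sum_z F i z = 1) ->
  \sum_z \sum_(i in A) F i z / #|A|%:R = 1.
Proof.
move=> A0 F1; rewrite exchange_big /=.
rewrite (eq_bigr (fun=> #|A|%:R^-1)) => [|i iA]; last by rewrite -mulr_suml F1 ?mul1r.
by rewrite sumr_const -[_^-1 *+ _]mulr_natr mulVf // pnatr_eq0 -lt0n card_gt0.
Qed.

Lemma product_coupling (R : realType) (V : finType) (mu nu : V -> R) :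
  (forall z, 0 <= mu z) -> (forall z, 0 <= nu z) ->
  \sum_z mu z = 1 -> \sum_z nu z = 1 ->
  is_coupling mu nu (fun x y => mu x * nu y).
Proof.
move=> mu_ge0 nu_ge0 mu1 nu1; split=> [x y|x|y]; first exact: mulr_ge0.
- by rewrite -mulr_sumr nu1 mulr1.
- by rewrite -mulr_suml mu1 mul1r.
Qed.

Lemma mulr_le_of_lt (R : realFieldType) (k d M : R) : 0 <= d ->
  (forall kd, kd < k -> kd * d <= M) -> k * d <= M.
Proof.
move=> d_ge0 kdM; have [d0|d_neq0] := eqVneq d 0.
  by have := kdM (k - 1); rewrite d0 !mulr0; apply; rewrite ltrBlDr ltrDl ltr01.
have d_gt0 : 0 < d by rewrite lt0r d_neq0.
rewrite -ler_pdivlMr //; apply/unstable.ler_ltP => kd kd_lt.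
by rewrite ler_pdivlMr // kdM.
Qed.

Lemma near_left1_in01 (R : realType) : \forall a \near (1 : R)^'-, 0 <= a < 1.
Proof.
near=> a; apply/andP; split; last by near: a; exact: nbhs_left_lt.
by apply/ltW; near: a; exact: nbhs_left_gt ltr01.
Unshelve. all: by end_near.
Qed.

Lemma ratio_lower_near1 (R : realType) (I : finType) (P : I -> Prop)
    (f : I -> R -> R) (kap kd : R) :
  kd < kap ->
  (forall i, P i -> exists2 k, (f i a / (1 - a)) @[a --> 1^'-] --> k & kap <= k) ->
  exists2 a, 0 <= a < 1 & forall i, P i -> kd * (1 - a) <= f i a.
Proof.
move=> kd_lt f_lim.
have f_near i : \forall a \near 1^'-, P i -> kd * (1 - a) <= f i a.
  have [Pi|notPi] := pselect (P i); last by apply: nearW => a /notPi.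
  have [k f_cvg kap_le] := f_lim i Pi.
  near=> a => _; have /andP[_ a_lt1] : 0 <= a < 1 by near: a; exact: near_left1_in01.
  rewrite -ler_pdivlMr ?subr_gt0 //; apply/ltW.
  by near: a; exact: cvgr_gt _ f_cvg _ (lt_le_trans kd_lt kap_le).
have : \forall a \near 1^'-, 0 <= a < 1 /\ forall i, P i -> kd * (1 - a) <= f i a.
  near=> a; split; near: a; first exact: near_left1_in01.
  exact: filter_forall f_near.
by move=> /filter_ex[a [a01 f_ge]]; exists a.
Unshelve. all: by end_near.
Qed.

Section Hypergraph.
Variables (R : realType) (V : finType) (H : {set hedge V}) (w : hedge V -> R).

Definition lipschitz1 (g : V -> R) := forall x y, g y - g x <= dist H w x y.

Lemma W1_ge_lipschitz (mu nu g : V -> R) :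
  (exists pi, is_coupling mu nu pi) -> lipschitz1 g ->
  \sum_y nu y * g y - \sum_x mu x * g x <= W1 H w mu nu.
Proof.
move=> [pi0 pi0_cpl] gL; apply: lb_le_inf.
  by exists (\sum_x \sum_y pi0 x y * dist H w x y); exists pi0.
move=> _ [pi [[pi_ge0 pi_mu pi_nu] ->]].
have -> : \sum_y nu y * g y - \sum_x mu x * g x =
    \sum_x \sum_y pi x y * (g y - g x).
  under eq_bigr do rewrite -pi_nu mulr_suml.
  under [X in _ - X]eq_bigr do rewrite -pi_mu mulr_suml.
  rewrite exchange_big -sumrB; apply: eq_bigr => x _.
  by rewrite -sumrB; apply: eq_bigr => y _; rewrite mulrBr.
by apply: ler_sum => x _; apply: ler_sum => y _; exact: ler_wpM2l.
Qed.

Hypothesis woh : is_woh H w.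

Definition hswap (h : hedge V) : hedge V := (h.2, h.1).

Lemma hswapK : involutive hswap. Proof. by case. Qed.

Lemma hswap_in h : (hswap h \in H) = (h \in H).
Proof. by case: h => A B; apply/idP/idP => /woh[_ _ _ []]. Qed.

Lemma weight_gt0 h : h \in H -> 0 < w h.
Proof. by move=> /woh[_ _ _ []]. Qed.

Lemma weight_hswap h : h \in H -> w (hswap h) = w h.
Proof. by move=> /woh[_ _ _ []]. Qed.

Lemma hedge_sides_disjoint h x : h \in H -> x \in h.1 -> x \notin h.2.
Proof.
move=> /woh[_ _ /eqP hAB _] xA; apply/negP => xB.
have : x \in h.1 :&: h.2 by rewrite inE xA xB.
by rewrite hAB inE.
Qed.

Lemma weight_le_wmax h : h \in H -> w h <= wmax H w.
Proof. exact: le_bigmax_cond. Qed.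

Lemma wmax_ge0 : 0 <= wmax H w.
Proof. exact: bigmax_ge_id. Qed.

Lemma sum_weight_ge0 (p : seq (hedge V)) : {subset p <= H} -> 0 <= \sum_(h <- p) w h.
Proof. by move=> pH; rewrite big_seq; apply: sumr_ge0 => h /pH /weight_gt0 /ltW. Qed.

Lemma Gamma_in_out v : Gamma_in H v = Gamma_out H v.
Proof.
apply/setP => z; rewrite !inE; apply/existsP/existsP => -[h /and3P[hH vh zh]];
  by exists (hswap h); rewrite hswap_in /= hH vh zh.
Qed.

(** * Directed distance *)

Definition path_weights u v : set R :=
  [set x | exists p, is_dpath H u v p /\ x = \sum_(h <- p) w h].

Lemma dist_path_weights u v : u != v -> dist H w u v = inf (path_weights u v).
Proof. by rewrite /dist => /negbTE ->. Qed.

Lemma dist_xx u : dist H w u u = 0.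
Proof. by rewrite /dist eqxx. Qed.

Lemma dpath_subset u v p : is_dpath H u v p -> {subset p <= H}.
Proof. by case: p => // h t /and4P[/allP]. Qed.

Lemma dpath_head u v p : is_dpath H u v p -> exists2 h, h \in H & u \in h.1.
Proof. by case: p => // h t /and4P[/andP[hH _] uh _ _]; exists h. Qed.

Lemma dpath_cat x y z p q :
  is_dpath H x y p -> is_dpath H y z q -> is_dpath H x z (p ++ q).
Proof.
case: p => // h0 t; case: q => // g0 s /and4P[pH xh0 yl pt] /and4P[qH yg0 zl qs].
apply/and4P; split=> //; first by rewrite all_cat pH.
- by rewrite last_cat.
- rewrite cat_path pt /= qs andbT; apply/set0Pn; exists y; by rewrite inE yl yg0.
Qed.

Lemma path_weights_nonempty u v :
  strongly_connected H -> u != v -> path_weights u v !=set0.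
Proof. by move=> sc /sc[p dp]; exists (\sum_(h <- p) w h), p. Qed.

Lemma path_weights_lbound u v : lbound (path_weights u v) 0.
Proof. by move=> _ [p [/dpath_subset pH ->]]; exact: sum_weight_ge0. Qed.

Lemma dist_ge0 u v : 0 <= dist H w u v.
Proof.
rewrite /dist; case: eqP => // _.
have [ne|empty] := pselect (path_weights u v !=set0).
  exact: lb_le_inf ne (@path_weights_lbound u v).
rewrite (_ : [set _ | _] = set0) ?inf0 //.
by apply/seteqP; split=> // x px; apply: empty; exists x.
Qed.

Lemma dist_le_path u v p : is_dpath H u v p -> dist H w u v <= \sum_(h <- p) w h.
Proof.
move=> dp; rewrite /dist; case: eqP => _; first exact: sum_weight_ge0 (dpath_subset dp).
apply: ge_inf; last by exists p.
by exists 0; exact: path_weights_lbound.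
Qed.

Lemma dist_le_weight h x y : h \in H -> x \in h.1 -> y \in h.2 -> dist H w x y <= w h.
Proof.
move=> hH xh yh; have -> : w h = \sum_(g <- [:: h]) w g by rewrite big_seq1.
by apply: dist_le_path; rewrite /is_dpath /= hH xh yh.
Qed.

Lemma dist_gt0 u v : strongly_connected H -> u != v -> 0 < dist H w u v.
Proof.
move=> sc uv; pose m := \big[Order.min/1]_(h in H) w h.
have m_gt0 : 0 < m by apply: lt_bigmin => // h /weight_gt0.
apply: lt_le_trans m_gt0 _; rewrite dist_path_weights //.
apply: lb_le_inf (path_weights_nonempty sc uv) _ => _ [[|h p] [dp ->]] //.
have hpH := dpath_subset dp; rewrite big_cons.
apply: le_trans (bigmin_le_cond _ _ (hpH h (mem_head h p))) _.
by rewrite lerDl; apply: sum_weight_ge0 => g gp; apply: hpH; rewrite inE gp orbT.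
Qed.

Lemma dist_triangle x y z : strongly_connected H ->
  dist H w x z <= dist H w x y + dist H w y z.
Proof.
move=> sc.
have [->|xz] := eqVneq x z; first by rewrite dist_xx addr_ge0 ?dist_ge0.
have [<-|xy] := eqVneq x y; first by rewrite dist_xx add0r.
have [<-|yz] := eqVneq y z; first by rewrite dist_xx addr0.
rewrite -lerBlDl [dist _ _ y z]dist_path_weights //.
apply: lb_le_inf (path_weights_nonempty sc yz) _ => _ [q [dq ->]].
rewrite lerBlDl -lerBlDr [dist _ _ x y]dist_path_weights //.
apply: lb_le_inf (path_weights_nonempty sc xy) _ => _ [p [dp ->]].
by rewrite lerBlDr -big_cat; exact/dist_le_path/(dpath_cat dp dq).
Qed.

(* The default [x0] only matters for empty [A]; it is always taken in [A]. *)
Definition dist_to (A : {set V}) (x0 z : V) : R :=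
  \big[Order.min/dist H w x0 z]_(x in A) dist H w x z.

Lemma dist_to_le (A : {set V}) x0 x z : x \in A -> dist_to A x0 z <= dist H w x z.
Proof. exact: bigmin_le_cond. Qed.

Lemma lipschitz1_dist_to (A : {set V}) x0 : strongly_connected H -> x0 \in A ->
  lipschitz1 (dist_to A x0).
Proof.
move=> sc x0A z y; rewrite lerBlDr -lerBlDl.
have near_z x : x \in A -> dist_to A x0 y - dist H w z y <= dist H w x z.
  by move=> xA; have := dist_to_le x0 y xA; have := dist_triangle x z y sc; lra.
by apply: le_bigmin => [|x /near_z]; first exact: near_z.
Qed.

Lemma Lh_le_dist (h : hedge V) x y : x \in h.1 -> y \in h.2 -> Lh H w h <= dist H w x y.
Proof.
move=> xh yh; apply: ge_inf; last by exists x, y.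
by exists 0 => _ [x' [y' [_ [_ ->]]]]; exact: dist_ge0.
Qed.

Lemma W1_ge0 (mu nu : V -> R) : 0 <= W1 H w mu nu.
Proof.
rewrite /W1; set C := [set c | _].
have C_lb : lbound C 0.
  move=> _ [pi [[pi_ge0 _ _] ->]].
  by apply: sumr_ge0 => x _; apply: sumr_ge0 => y _; rewrite mulr_ge0 ?dist_ge0.
have [ne|empty] := pselect (C !=set0); first exact: lb_le_inf ne C_lb.
by rewrite (_ : C = set0) ?inf0 //; apply/seteqP; split=> // c Cc; apply: empty; exists c.
Qed.

Lemma lipschitz1_dist u : strongly_connected H -> lipschitz1 (dist H w u).
Proof. by move=> sc x y; rewrite lerBlDl; exact: dist_triangle. Qed.

Lemma lipschitz1_across g h x y : lipschitz1 g ->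
  h \in H -> x \in h.1 -> y \in h.2 -> `|g y - g x| <= wmax H w.
Proof.
move=> gL hH xh yh; apply/ler_normlP; split.
  rewrite opprB; apply: le_trans (gL y x) _.
  have sH : hswap h \in H by rewrite hswap_in.
  exact: le_trans (dist_le_weight sH yh xh) (weight_le_wmax sH).
exact: le_trans (gL x y) (le_trans (dist_le_weight hH xh yh) (weight_le_wmax hH)).
Qed.

Definition edge_lipschitz (c : R) (F : V -> R) :=
  forall h x y, h \in H -> x \in h.1 -> y \in h.2 -> F y - F x <= c * w h.

Lemma dpath_lipschitz c F u v p : edge_lipschitz c F ->
  is_dpath H u v p -> F v - F u <= c * \sum_(h <- p) w h.
Proof.
move=> FL; case: p => // h0 t; elim: t h0 u => [|h1 t IH] h0 u.
  by move=> /and4P[/andP[h0H _] uh vh _]; rewrite big_seq1; exact: FL.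
move=> /and4P[/andP[h0H tH] uh vl /andP[/set0Pn[m] + ht]].
rewrite inE => /andP[mh0 mh1]; rewrite big_cons mulrDr.
have := IH h1 m (introT and4P (And4 tH mh1 vl ht)).
have := FL _ _ _ h0H uh mh0; lra.
Qed.

Lemma dist_lipschitz c F u v : strongly_connected H -> 0 <= c ->
  edge_lipschitz c F -> F v - F u <= c * dist H w u v.
Proof.
move=> sc c_ge0 FL; have [<-|uv] := eqVneq u v; first by rewrite subrr dist_xx mulr0.
have [c0|c_neq0] := eqVneq c 0.
  by have [p dp] := sc _ _ uv; have := dpath_lipschitz FL dp; rewrite c0 !mul0r.
have c_gt0 : 0 < c by rewrite lt0r c_neq0.
rewrite -ler_pdivrMl // dist_path_weights //.
apply: lb_le_inf (path_weights_nonempty sc uv) _ => _ [p [dp ->]].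
by rewrite ler_pdivrMl //; exact: dpath_lipschitz dp.
Qed.

(** * Lazy random walk measures *)

Lemma mu_in_out a u z : mu_in H w a u z = mu_out H w a u z.
Proof.
rewrite /mu_in /mu_out; case: eqP => // _; case: ifP => // _; congr (_ * _).
have hswap_inj := can_inj hswapK.
have -> : \sum_(h in H | u \in h.2) w h = \sum_(h in H | u \in h.1) w h.
  rewrite (reindex_inj hswap_inj); apply: eq_big => [h|h /andP[hH _]].
    by rewrite hswap_in.
  by rewrite weight_hswap // -hswap_in.
rewrite (reindex_inj hswap_inj); apply: eq_big => [h|h /andP[hH _]].
  by rewrite hswap_in.
by rewrite /= weight_hswap // -hswap_in.
Qed.

Lemma mu_outE a v z : mu_out H w a v z =
  (if z == v then a else 0) + (1 - a) *
  \sum_(h in H | (v \in h.1) && (z \in h.2))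
     (1 / #|h.2|%:R) * (w h / \sum_(h' in H | v \in h'.1) w h').
Proof.
rewrite /mu_out; have [->|zv] := eqVneq z v.
  rewrite big1 ?mulr0 ?addr0 // => h /and3P[hH vh1 vh2].
  by move: (hedge_sides_disjoint hH vh1); rewrite vh2.
rewrite add0r; case: ifP => // zG.
rewrite big1 ?mulr0 // => h /and3P[hH vh zh].
by move: zG; rewrite inE => /existsP; case; exists h; rewrite hH vh zh.
Qed.

Lemma mu_out_ge0 a v z : 0 <= a <= 1 -> 0 <= mu_out H w a v z.
Proof.
move=> /andP[a_ge0 a_le1]; rewrite mu_outE.
apply: addr_ge0; first by case: ifP.
apply: mulr_ge0; first by rewrite subr_ge0.
apply: sumr_ge0 => h /andP[hH _]; apply: mulr_ge0; first by rewrite div1r invr_ge0.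
apply: divr_ge0; first exact/ltW/weight_gt0.
by apply: sumr_ge0 => g /andP[gH _]; exact/ltW/weight_gt0.
Qed.

Lemma mu_out_support a v z : z != v -> mu_out H w a v z != 0 ->
  exists2 h, h \in H & (v \in h.1) && (z \in h.2).
Proof.
rewrite /mu_out => /negbTE ->; case: ifP => [|_]; last by rewrite eqxx.
by rewrite inE => /existsP[h /andP[hH vzh]] _; exists h.
Qed.

Lemma mu_out_mass a v : (exists2 h, h \in H & v \in h.1) ->
  \sum_z mu_out H w a v z = 1.
Proof.
move=> [h0 h0H vh0]; set S := \sum_(h in H | v \in h.1) w h.
have S_gt0 : 0 < S.
  rewrite /S (bigD1 h0) /=; last by rewrite h0H.
  apply: lt_le_trans (weight_gt0 h0H) _; rewrite lerDl.
  by apply: sumr_ge0 => h /andP[/andP[hH _] _]; exact/ltW/weight_gt0.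
under eq_bigr do rewrite mu_outE.
rewrite big_split /= -big_mkcond big_pred1_eq -mulr_sumr.
suff -> : \sum_z \sum_(h in H | (v \in h.1) && (z \in h.2))
    (1 / #|h.2|%:R) * (w h / S) = 1 by rewrite mulr1 subrKC.
rewrite (exchange_big_dep (fun h => (h \in H) && (v \in h.1))) /=; last first.
  by move=> z h _ /and3P[-> ->].
rewrite -[RHS](divff (lt0r_neq0 S_gt0)) {1}/S mulr_suml.
apply: eq_bigr => h /andP[hH vh].
rewrite (eq_bigl (fun z => z \in h.2)) => [|z]; last by rewrite hH vh.
have [_ /set0Pn[y yB] _ _] := woh hH.
have nB : (#|h.2|%:R : R) != 0 by rewrite pnatr_eq0 -lt0n card_gt0; apply/set0Pn; exists y.
by rewrite -/S sumr_const -[(_ * _) *+ _]mulr_natr div1r mulrAC mulVf ?mul1r.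
Qed.

Lemma mu_out_expect a v g : 0 <= a <= 1 -> (exists2 h, h \in H & v \in h.1) ->
  lipschitz1 g -> `|\sum_z mu_out H w a v z * g z - g v| <= (1 - a) * wmax H w.
Proof.
move=> a01 v_out gL.
have := @sum_mul_center_dev _ _ (mu_out H w a v) g v (wmax H w) (fun z => mu_out_ge0 v z a01).
rewrite mu_out_mass // mul1r /mu_out eqxx; apply=> z zv /(mu_out_support zv).
by case=> h hH /andP[vh zh]; exact: lipschitz1_across gL hH vh zh.
Qed.

Lemma mu_x_out n a x z : mu_x H w n a x z = mu_out H w a x z / n%:R.
Proof.
rewrite -mu_in_out /mu_x /mu_in Gamma_in_out; case: eqP => // _.
case: ifP => _; last by rewrite mul0r.
rewrite -mulrA mulr_suml; congr (_ * _); apply: eq_bigr => h _.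
by rewrite !div1r invfM -mulrA mulrC.
Qed.

Lemma mu_y_out m a y z : mu_y H w m a y z = mu_out H w a y z / m%:R.
Proof.
rewrite /mu_y /mu_out; case: eqP => // _; case: ifP => _; last by rewrite mul0r.
rewrite -mulrA mulr_suml; congr (_ * _); apply: eq_bigr => h _.
by rewrite !div1r invfM -mulrA mulrC.
Qed.

Lemma mu_A_avg h a :
  mu_A H w h a = fun z => \sum_(x in h.1) mu_out H w a x z / #|h.1|%:R.
Proof. by apply/funext => z; apply: eq_bigr => x _; exact: mu_x_out. Qed.

Lemma mu_B_avg h a :
  mu_B H w h a = fun z => \sum_(y in h.2) mu_out H w a y z / #|h.2|%:R.
Proof. by apply/funext => z; apply: eq_bigr => y _; exact: mu_y_out. Qed.

(** * Curvature bounds *)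

Lemma mu_avg_ge0 (A : {set V}) a z : 0 <= a <= 1 ->
  0 <= \sum_(x in A) mu_out H w a x z / #|A|%:R.
Proof. by move=> a01; apply: sumr_ge0 => x _; rewrite divr_ge0 ?mu_out_ge0. Qed.

Lemma W1_mu_AB_ge h a : strongly_connected H -> h \in H -> 0 <= a <= 1 ->
  Lh H w h - 2 * (1 - a) * wmax H w <= W1 H w (mu_A H w h a) (mu_B H w h a).
Proof.
move=> sc hH a01; have [A0 B0 _ _] := woh hH; have /set0Pn[x0 x0A] := A0.
have x_out x : x \in h.1 -> exists2 g, g \in H & x \in g.1 by exists h.
have y_out y : y \in h.2 -> exists2 g, g \in H & y \in g.1.
  by exists (hswap h); rewrite ?hswap_in.
pose f := dist_to h.1 x0; have fL : lipschitz1 f := lipschitz1_dist_to sc x0A.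
have EA : \sum_z mu_A H w h a z * f z <= (1 - a) * wmax H w.
  rewrite mu_A_avg expect_avg; apply: sum_div_card_le => // x xA.
  have /ler_normlP[_] := mu_out_expect a01 (x_out x xA) fL.
  have : f x <= 0 by rewrite -(dist_xx x); exact: dist_to_le.
  lra.
have EB : Lh H w h - (1 - a) * wmax H w <= \sum_z mu_B H w h a z * f z.
  rewrite mu_B_avg expect_avg; apply: le_sum_div_card => // y yB.
  have /ler_normlP[+ _] := mu_out_expect a01 (y_out y yB) fL.
  have : Lh H w h <= f y by apply: le_bigmin => [|x xA]; exact: Lh_le_dist.
  lra.
have cpl : exists pi, is_coupling (mu_A H w h a) (mu_B H w h a) pi.
  exists (fun x y => mu_A H w h a x * mu_B H w h a y).
  rewrite mu_A_avg mu_B_avg; apply: product_coupling => [z|z||].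
  - exact: mu_avg_ge0.
  - exact: mu_avg_ge0.
  - by apply: avg_mass => // x /x_out; exact: mu_out_mass.
  - by apply: avg_mass => // y /y_out; exact: mu_out_mass.
by have := W1_ge_lipschitz cpl fL; lra.
Qed.

Lemma kappa_h_ratio_le h a : strongly_connected H -> h \in H -> 0 <= a < 1 ->
  0 < Lh H w h -> kappa_h H w h a / (1 - a) <= 2 * wmax H w / Lh H w h.
Proof.
move=> sc hH /andP[a_ge0 a_lt1] L_gt0.
have a01 : 0 <= a <= 1 by rewrite a_ge0 ltW.
have := W1_mu_AB_ge sc hH a01.
rewrite /kappa_h; set L := Lh H w h; set W := W1 _ _ _ _ => W_ge.
rewrite ler_pdivrMr ?subr_gt0 // -(ler_pM2r L_gt0).
rewrite mulrBl mul1r divfK ?lt0r_neq0 // mulrAC divfK ?lt0r_neq0 //.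
lra.
Qed.

Definition expected_dist a u z : R := \sum_t mu_out H w a z t * dist H w u t.

Lemma W1_mu_in_out_ge a u h x y : strongly_connected H -> 0 <= a <= 1 ->
  h \in H -> x \in h.1 -> y \in h.2 ->
  expected_dist a u y - expected_dist a u x <= W1 H w (mu_in H w a x) (mu_out H w a y).
Proof.
move=> sc a01 hH xh yh.
have sH : hswap h \in H by rewrite hswap_in.
have -> : mu_in H w a x = mu_out H w a x by apply/funext => z; exact: mu_in_out.
apply: W1_ge_lipschitz (lipschitz1_dist u sc).
exists (fun s t => mu_out H w a x s * mu_out H w a y t).
apply: product_coupling => [z|z||]; rewrite ?mu_out_ge0 //; apply: mu_out_mass.
  by exists h.
by exists (hswap h).
Qed.

Lemma kappa_uv_le1 x y a : kappa_uv H w x y a <= 1.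
Proof. by rewrite /kappa_uv gerBl divr_ge0 ?W1_ge0 ?dist_ge0. Qed.

Lemma dist_le_of_kappa_uv a kd u v : strongly_connected H -> 0 <= a < 1 ->
  (forall h x y, h \in H -> x \in h.1 -> y \in h.2 ->
     kd * (1 - a) <= kappa_uv H w x y a) ->
  kd * dist H w u v <= 2 * wmax H w.
Proof.
move=> sc /andP[a_ge0 a_lt1] kappa_ge.
have a01 : 0 <= a <= 1 by rewrite a_ge0 ltW.
have [<-|uv] := eqVneq u v; first by rewrite dist_xx mulr0 mulr_ge0 ?wmax_ge0.
have [_ /dpath_head u_out] := sc _ _ uv.
have vu : v != u by rewrite eq_sym.
have [_ /dpath_head v_out] := sc _ _ vu.
set c := 1 - kd * (1 - a).
have c_ge0 : 0 <= c.
  have [h0 h0H uh0] := u_out; have [_ /set0Pn[y0 y0h] _ _] := woh h0H.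
  by have := kappa_ge _ _ _ h0H uh0 y0h; have := kappa_uv_le1 u y0 a; rewrite /c; lra.
have phiL : edge_lipschitz c (expected_dist a u).
  move=> h x y hH xh yh.
  have xy : x != y by apply: contraNneq (hedge_sides_disjoint hH xh) => ->.
  have d_gt0 := dist_gt0 sc xy.
  apply: le_trans (W1_mu_in_out_ge u sc a01 hH xh yh) _.
  have : W1 H w (mu_in H w a x) (mu_out H w a y) / dist H w x y <= c.
    by have := kappa_ge _ _ _ hH xh yh; rewrite /kappa_uv /c; lra.
  rewrite ler_pdivrMr // => W_le.
  exact: le_trans W_le (ler_wpM2l c_ge0 (dist_le_weight hH xh yh)).
have := dist_lipschitz u v sc c_ge0 phiL.
have /ler_normlP[_] := mu_out_expect a01 u_out (lipschitz1_dist u sc).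
have /ler_normlP[+ _] := mu_out_expect a01 v_out (lipschitz1_dist u sc).
rewrite dist_xx /expected_dist /c => E_v E_u lip.
rewrite -(ler_pM2r (_ : 0 < 1 - a)) ?subr_gt0 //.
lra.
Qed.

Lemma Lh_le_of_kappa_h_cvg h k : strongly_connected H -> h \in H ->
  (kappa_h H w h a / (1 - a)) @[a --> 1^'-] --> k -> 0 < k ->
  Lh H w h <= 2 * wmax H w / k.
Proof.
move=> sc hH kappa_cvg k_gt0; have [L_le0|L_gt0] := lerP (Lh H w h) 0.
  by apply: le_trans L_le0 _; rewrite divr_ge0 ?mulr_ge0 ?wmax_ge0 // ltW.
rewrite ler_pdivlMr // mulrC -ler_pdivlMr //.
apply: (cvgr_to_le kappa_cvg); near=> a.
by apply: kappa_h_ratio_le L_gt0 => //; near: a; exact: near_left1_in01.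
Unshelve. all: by end_near.
Qed.

End Hypergraph.

Theorem mainTheorem8 (R : realType) (V : finType)
    (H : {set ({set V} * {set V})}) (w : {set V} * {set V} -> R) :
  is_woh H w -> strongly_connected H -> (1 < #|V|)%N ->
  (forall (h : {set V} * {set V}) (k : R), h \in H ->
     (kappa_h H w h a / (1 - a)) @[a --> 1^'-] --> k -> 0 < k ->
     Lh H w h <= 2 * wmax H w / k) /\
  (forall kap : R, 0 < kap ->
     (forall (h : {set V} * {set V}) (u v : V), h \in H -> u \in h.1 -> v \in h.2 ->
        exists2 k : R, (kappa_uv H w u v a / (1 - a)) @[a --> 1^'-] --> k & kap <= k) ->
     diam H w <= 2 * wmax H w / kap).
Proof.
move=> woh sc _; split=> [h k hH|kap kap_gt0 kappa_lim]; first exact: Lh_le_of_kappa_h_cvg.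
rewrite /diam; apply: bigmax_le => [|[u v] _ /=].
  by rewrite divr_ge0 ?mulr_ge0 ?wmax_ge0 // ltW.
rewrite ler_pdivlMr // mulrC; apply: mulr_le_of_lt (dist_ge0 woh u v) _ => kd kd_lt.
have [a a01 kappa_ge] := ratio_lower_near1
  (P := fun e : hedge V * V * V => [/\ e.1.1 \in H, e.1.2 \in e.1.1.1 & e.2 \in e.1.1.2])
  (f := fun e => kappa_uv H w e.1.2 e.2) kd_lt
  (fun '(g, x, y) '(And3 gH xg yg) => kappa_lim g x y gH xg yg).
apply: (dist_le_of_kappa_uv woh u v sc a01) => g x y gH xg yg.
exact: (kappa_ge (g, x, y)).
Qed.
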